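(* Let $r, s \ge 5$ be integers. Then the graph $P_r \,\square\, P_s$ has a unique $\mathrm{gp_e}$-set, i.e., there is exactly one edge general position set of $P_r \,\square\, P_s$ of cardinality $\mathrm{gp_e}(P_r \,\square\, P_s)$.
   Context: $P_n$ denotes the path on $n$ vertices. The Cartesian product $G \,\square\, H$ has vertex set $V(G)\times V(H)$, with $(g,h)$ adjacent to $(g',h')$ iff either $gg' \in E(G)$ and $h = h'$, or $g = g'$ and $hh' \in E(H)$. A set $S$ of edges of a graph $G$ is an edge general position set if no geodesic (shortest path) of $G$ contains three edges of $S$; $\mathrm{gp_e}(G)$ is the maximum cardinality of an edge general position set of $G$, and an edge general position set of maximum cardinality is called a $\mathrm{gp_e}$-set. *)

From mathcomp Require Import all_boot.
Set Implicit Arguments. Unset Strict Implicit. Unset Printing Implicit Defensive.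

Section Graphs.
Variables (T : finType) (e : rel T).

Definition edge_set : {set {set T}} :=
  [set A : {set T} | [exists x, exists y, e x y && (A == [set x; y])]].

Definition walk_edges (x : T) (p : seq T) : seq {set T} :=
  pairmap (fun a b => [set a; b]) x p.

Definition geodesic (x : T) (p : seq T) : Prop :=
  path e x p /\
  forall q : seq T, path e x q -> last x q = last x p -> size p <= size q.

Definition edge_gp_set (S : {set {set T}}) : Prop :=
  S \subset edge_set /\
  forall (x : T) (p : seq T), geodesic x p ->
    #|[set A in S | A \in walk_edges x p]| < 3.

Definition gpe_set (S : {set {set T}}) : Prop :=
  edge_gp_set S /\ forall S' : {set {set T}}, edge_gp_set S' -> #|S'| <= #|S|.

End Graphs.

Definition path_graph_rel (n : nat) : rel 'I_n :=
  fun i j => (i.+1 == j :> nat) || (j.+1 == i :> nat).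

Definition cart_prod_rel (A B : finType) (eA : rel A) (eB : rel B) : rel (A * B) :=
  fun u v => (eA u.1 v.1 && (u.2 == v.2)) || ((u.1 == v.1) && eB u.2 v.2).

Definition grid_rel (r s : nat) : rel ('I_r * 'I_s) :=
  cart_prod_rel (@path_graph_rel r) (@path_graph_rel s).
Arguments grid_rel : clear implicits.

From mathcomp Require Import all_boot zify.
Set Implicit Arguments. Unset Strict Implicit. Unset Printing Implicit Defensive.

(* A geodesic of the grid is a walk that is monotone in both coordinates, so
   three edges lie on a common geodesic exactly when they can be traversed in
   the same quadrant direction.  Record an edge set S by the lower endpoints H
   of its horizontal edges and V of its vertical edges.  If S is in general
   position, no row contains three H-points, no column three V-points, a row
   with two H-points confines all vertical edges strictly between them (and
   symmetrically), and a vertical pair together with a horizontal edge between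
   its rows forbids vertical edges beyond that horizontal edge.  Counting per
   row and column then gives |S| <= |H| + |V| <= 2r + 2s - 8, with equality
   only when every interior row carries its two end edges and every interior
   column likewise.  Conversely the 2r + 2s - 8 spokes, the edges with exactly
   one endpoint on the border, are in general position: a monotone walk through
   three spokes would push the first or the last one onto the border line
   touched by the middle one. *)

Lemma set2_eq (T : finType) (a b c d : T) :
  [set a; b] = [set c; d] -> (a = c /\ b = d) \/ (a = d /\ b = c).
Proof.
move=> E; have /set2P[ac|ad] : a \in [set c; d] by rewrite -E set21.
all: have /set2P[bc|bd] : b \in [set c; d] by rewrite -E set22.
all: have /set2P[ca|cb] : c \in [set a; b] by rewrite E set21.
all: have /set2P[da|db] : d \in [set a; b] by rewrite E set22.
all: subst; tauto.
Qed.

Lemma card_gt2_sorted (T : finType) (A : {pred T}) (f : T -> nat) :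
  {in A &, injective f} -> 2 < #|A| ->
  exists x y z, [/\ x \in A, y \in A & z \in A] /\ f x < f y < f z.
Proof.
move=> f_inj /card_gt2P[x [y [z [[Ax Ay Az] [xy yz zx]]]]].
have neq u v : u \in A -> v \in A -> u != v -> f u != f v.
  by move=> Au Av; apply: contra => /eqP /f_inj ->.
move: (neq _ _ Ax Ay xy) (neq _ _ Ay Az yz) (neq _ _ Az Ax zx) => n1 n2 n3.
have : (f x < f y < f z) \/ (f x < f z < f y) \/ (f y < f x < f z) \/
       (f y < f z < f x) \/ (f z < f x < f y) \/ (f z < f y < f x) by lia.
case=> [|[|[|[|[|]]]]] lt; first [by exists x, y, z | by exists x, z, y
  | by exists y, x, z | by exists y, z, x | by exists z, x, y | by exists z, y, x].
Qed.

Lemma walk_edges_cat (T : finType) (x : T) p y q :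
  [set last x p; y] \in walk_edges x (p ++ y :: q).
Proof. by rewrite /walk_edges pairmap_cat mem_cat /= inE eqxx orbT. Qed.

(** * Geodesics of the grid *)

Definition distn (m n : nat) : nat := (m - n) + (n - m).

Lemma path_graph_closer n (i j : 'I_n) : i != j ->
  exists2 k : 'I_n, path_graph_rel i k & distn k j = (distn i j).-1.
Proof.
case: (ltngtP i j) => [lt_ij|lt_ji|/val_inj->]; last by rewrite eqxx.
- by exists (Ordinal (leq_ltn_trans lt_ij (ltn_ord j)));
    rewrite /path_graph_rel /distn /=; lia.
- by exists (Ordinal (leq_ltn_trans (leq_pred i) (ltn_ord i)));
    rewrite /path_graph_rel /distn /=; lia.
Qed.

Section GridGeodesics.
Variables r s : nat.
Local Notation T := ('I_r * 'I_s)%type.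
Local Notation e := (grid_rel r s).

Definition grid_dist (u v : T) : nat := distn u.1 v.1 + distn u.2 v.2.

Lemma grid_vertex_eq (u v : T) : u.1 = v.1 :> nat -> u.2 = v.2 :> nat -> u = v.
Proof. by case: u v => [? ?] [? ?] /= /val_inj-> /val_inj->. Qed.

Lemma grid_relE (u v : T) : e u v = (grid_dist u v == 1).
Proof.
rewrite /grid_rel /cart_prod_rel /path_graph_rel /grid_dist /distn -!val_eqE /=.
by apply/idP/idP; lia.
Qed.

Lemma grid_rel_irr : irreflexive e.
Proof. by move=> u; rewrite grid_relE /grid_dist /distn !subnn. Qed.

Lemma grid_dist_triangle (u v w : T) : grid_dist u w <= grid_dist u v + grid_dist v w.
Proof. rewrite /grid_dist /distn; lia. Qed.

Lemma grid_dist_eq0 (u v : T) : (grid_dist u v == 0) = (u == v).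
Proof.
apply/eqP/eqP => [|->]; rewrite /grid_dist /distn; last lia.
by move=> d0; apply: grid_vertex_eq; lia.
Qed.

Lemma grid_closer (u v : T) : u != v ->
  exists2 w, e u w & grid_dist w v = (grid_dist u v).-1.
Proof.
case: u v => [u1 u2] [v1 v2]; have [<-|ne1] := eqVneq u1 v1; last first.
  have [k uk dk] := path_graph_closer ne1 => _.
  exists (k, u2); first by rewrite /grid_rel /cart_prod_rel /= uk eqxx.
  by move: ne1 dk; rewrite -val_eqE /grid_dist /distn /=; lia.
rewrite xpair_eqE eqxx /= => /path_graph_closer[k uk dk].
exists (u1, k); first by rewrite /grid_rel /cart_prod_rel /= uk eqxx orbT.
by move: dk; rewrite /grid_dist /distn /=; lia.
Qed.

Lemma grid_shortest_walk (u v : T) :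
  exists p, [/\ path e u p, last u p = v & size p = grid_dist u v].
Proof.
move: {2}(grid_dist u v) (erefl (grid_dist u v)) => n.
elim: n u => [|n IH] u duv.
  by exists [::]; split=> //; apply/eqP; rewrite -grid_dist_eq0 duv.
have [|w uw dw] := @grid_closer u v; first by rewrite -grid_dist_eq0 duv.
have /IH[p [wp lp sp]] : grid_dist w v = n by rewrite dw duv.
by exists (w :: p); rewrite /= uw wp lp sp dw duv.
Qed.

Lemma grid_dist_le_size x p : path e x p -> grid_dist x (last x p) <= size p.
Proof.
elim: p x => [|y p IH] x /=; first by rewrite /grid_dist /distn; lia.
rewrite grid_relE => /andP[/eqP dxy /IH]; have := grid_dist_triangle x y (last y p); lia.
Qed.

Lemma geodesic_size x p : geodesic e x p -> size p = grid_dist x (last x p).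
Proof.
case=> xp p_min; apply/eqP; rewrite eqn_leq grid_dist_le_size // andbT.
have [q [xq lq <-]] := grid_shortest_walk x (last x p).
exact: p_min.
Qed.

Definition le_dir (up : bool) (m n : nat) : bool := if up then m <= n else n <= m.

Definition grid_le (dir : bool * bool) (u v : T) : bool :=
  le_dir dir.1 u.1 v.1 && le_dir dir.2 u.2 v.2.

Section Monotone.
Variable dir : bool * bool.

Lemma grid_le_refl : reflexive (grid_le dir).
Proof. by case: dir => [[] []] u; rewrite /grid_le /le_dir /= !leqnn. Qed.

Lemma grid_le_trans : transitive (grid_le dir).
Proof. case: dir => [[] []] v u w; rewrite /grid_le /le_dir /=; lia. Qed.

Lemma grid_le_anti u v : grid_le dir u v -> grid_le dir v u -> u = v.
Proof.
by case: dir => [[] []]; rewrite /grid_le /le_dir /= => ? ?; apply: grid_vertex_eq; lia.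
Qed.

Lemma grid_le_last x p : path (grid_le dir) x p -> grid_le dir x (last x p).
Proof.
elim: p x => [|y p IH] x /=; first by rewrite grid_le_refl.
by case/andP=> le_xy /IH; apply: grid_le_trans.
Qed.

Lemma grid_dist_add u v w : grid_le dir u v -> grid_le dir v w ->
  grid_dist u w = grid_dist u v + grid_dist v w.
Proof. case: dir => [[] []]; rewrite /grid_le /le_dir /grid_dist /distn /=; lia. Qed.

Lemma grid_dist_addK u v w : grid_le dir u w ->
  grid_dist u w = grid_dist u v + grid_dist v w -> grid_le dir u v && grid_le dir v w.
Proof. case: dir => [[] []]; rewrite /grid_le /le_dir /grid_dist /distn /=; lia. Qed.

Lemma shortest_walk_monotone x p : path e x p -> size p = grid_dist x (last x p) ->
  grid_le dir x (last x p) -> path (grid_le dir) x p.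
Proof.
elim: p x => [|y p IH] x //=; rewrite grid_relE => /andP[/eqP dxy yp] sp le_xl.
have dyl : size p = grid_dist y (last y p).
  by have := grid_dist_le_size yp; have := grid_dist_triangle x y (last y p); lia.
have /andP[-> le_yl] : grid_le dir x y && grid_le dir y (last y p).
  by apply: grid_dist_addK => //; lia.
exact: IH.
Qed.

Lemma monotone_walk_size x p : path e x p -> path (grid_le dir) x p ->
  size p = grid_dist x (last x p).
Proof.
elim: p x => [|y p IH] x /=; first by rewrite /grid_dist /distn; lia.
rewrite grid_relE => /andP[/eqP dxy yp] /andP[le_xy mp].
by rewrite (grid_dist_add le_xy (grid_le_last mp)) dxy (IH _ yp mp).
Qed.

Lemma monotone_walk_geodesic x p : path e x p -> path (grid_le dir) x p -> geodesic e x p.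
Proof.
move=> xp mp; split=> // q xq lq.
by rewrite (monotone_walk_size xp mp) -lq grid_dist_le_size.
Qed.

Lemma monotone_edges_neq a b c d : e a b ->
  grid_le dir a b -> grid_le dir b c -> grid_le dir c d -> [set a; b] != [set c; d].
Proof.
move=> eab le_ab le_bc le_cd; apply/eqP => /set2_eq[[ac _]|[ad _]]; subst.
  by move: eab; rewrite (grid_le_anti le_ab le_bc) grid_rel_irr.
have le_ba := grid_le_trans le_bc le_cd.
by move: eab; rewrite (grid_le_anti le_ab le_ba) grid_rel_irr.
Qed.

Definition edge_in (S : {set {set T}}) (a b : T) : bool := e a b && ([set a; b] \in S).

Lemma gp_no_monotone_chain S a1 b1 a2 b2 a3 b3 : edge_gp_set e S ->
  edge_in S a1 b1 -> edge_in S a2 b2 -> edge_in S a3 b3 ->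
  path (grid_le dir) a1 [:: b1; a2; b2; a3; b3] -> False.
Proof.
case=> _ gpS /andP[e1 S1] /andP[e2 S2] /andP[e3 S3] /and5P[m1 m2 m3 m4 /andP[m5 _]].
have [p [b1p lp sp]] := grid_shortest_walk b1 a2.
have [q [b2q lq sq]] := grid_shortest_walk b2 a3.
have mp : path (grid_le dir) b1 p by apply: shortest_walk_monotone; rewrite ?lp.
have mq : path (grid_le dir) b2 q by apply: shortest_walk_monotone; rewrite ?lq.
set w := b1 :: p ++ b2 :: q ++ [:: b3].
have geo : geodesic e a1 w.
  apply: monotone_walk_geodesic; rewrite /= cat_path /= lp cat_path /= lq.
    by rewrite e1 b1p e2 b2q e3.
  by rewrite m1 mp m3 mq m5.
have w1 : [set a1; b1] \in walk_edges a1 w by rewrite /walk_edges /= inE eqxx.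
have w2 : [set a2; b2] \in walk_edges a1 w.
  by have := walk_edges_cat a1 (b1 :: p) b2 (q ++ [:: b3]); rewrite /= lp.
have w3 : [set a3; b3] \in walk_edges a1 w.
  by have := walk_edges_cat a1 (b1 :: p ++ b2 :: q) b3 [::]; rewrite /= last_cat /= lq -catA.
have := gpS a1 w geo; rewrite ltnNge => /negP; apply; apply/card_gt2P.
exists [set a1; b1], [set a2; b2], [set a3; b3]; rewrite !in_set S1 S2 S3 w1 w2 w3.
split=> //; split; first exact: monotone_edges_neq e1 m1 m2 m3.
  exact: monotone_edges_neq e2 m3 m4 m5.
by rewrite eq_sym; apply: monotone_edges_neq e1 m1 (grid_le_trans m2 (grid_le_trans m3 m4)) m5.
Qed.

End Monotone.

Lemma geodesic_monotone x p : geodesic e x p -> exists dir, path (grid_le dir) x p.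
Proof.
move=> geo; exists (x.1 <= (last x p).1, x.2 <= (last x p).2).
apply: shortest_walk_monotone (geo.1) (geodesic_size geo) _.
by rewrite /grid_le /le_dir /=; do 2!case: ifP => /=; lia.
Qed.

End GridGeodesics.

(** * Counting along lines *)

Definition interior n : {set 'I_n} := [set i : 'I_n | 0 < i < n.-1].

Definition end_starts n : {set 'I_n} := [set i : 'I_n | (i == 0 :> nat) || (i == n.-2 :> nat)].

Lemma card_interior n : #|interior n| = n - 2.
Proof.
case: n => [|[|k]]; try by apply: eq_card0 => i; rewrite inE; case: i => [[|i]].
have -> : interior k.+2 = ~: [set ord0; ord_max].
  by apply/setP => i; rewrite !inE -!val_eqE /=; have := ltn_ord i; lia.
by rewrite cardsCs setCK cards2 card_ord.
Qed.

Lemma card_end_starts n : 2 < n -> #|end_starts n| = 2.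
Proof.
case: n => [|[|[|k]]] // _; have lt : k.+1 < k.+3 by [].
have -> : end_starts k.+3 = [set ord0; Ordinal lt].
  by apply/setP => i; rewrite !inE -!val_eqE.
by rewrite cards2 -val_eqE.
Qed.

Section Lines.
Variables (X : finType) (m : nat) (p : X -> 'I_m).

Definition line (A : {set X}) (i : 'I_m) : {set X} := [set x in A | p x == i].

Lemma card_lines (A : {set X}) : #|A| = \sum_i #|line A i|.
Proof.
rewrite -sum1_card (partition_big p xpredT) //=.
by apply: eq_bigr => i _; rewrite -sum1_card; apply: eq_bigl => x; rewrite !inE.
Qed.

Lemma card_lines_le (A : {set X}) (I : {set 'I_m}) k :
  (forall x, x \in A -> p x \in I) -> (forall i, #|line A i| <= k) ->
  #|A| <= #|I| * k ?= iff [forall i in I, #|line A i| == k].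
Proof.
move=> AI le_k; rewrite -sum_nat_const.
have -> : #|A| = \sum_(i in I) #|line A i|.
  rewrite card_lines (bigID (mem I)) /= [X in _ + X]big1 ?addn0 // => i iI.
  apply: eq_card0 => x; rewrite !inE; apply/andP => -[/AI pxI /eqP pxi].
  by rewrite -pxi pxI in iI.
by apply: leqif_sum => i _; apply: leqif_eq.
Qed.

Lemma full_lines_meet (A : {set X}) : (forall i, i \in interior m -> #|line A i| = 2) ->
  forall k, 0 < k < m.-1 -> exists2 x, x \in A & p x = k :> nat.
Proof.
move=> full k k_int; have k_lt : k < m by lia.
have /card_gt0P[x] : 0 < #|line A (Ordinal k_lt)| by rewrite full // inE.
by rewrite !inE => /andP[Ax /eqP pk]; exists x; rewrite ?pk.
Qed.

End Lines.

Section Admissible.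
Variables (X : finType) (m n : nat) (p : X -> 'I_m) (q : X -> 'I_n).
Hypothesis pq_inj : forall x y, p x = p y :> nat -> q x = q y :> nat -> x = y.

Definition spoke_starts : {set X} := [set x | (p x \in interior m) && (q x \in end_starts n)].

(* The grid is read through [p] (index of the line, e.g. the row) and [q]
   (position along it).  [H] stands for the starting points of the edges of an
   edge set running along the lines, from position [q x] to [q x + 1], and [V]
   for those of the edges running across them.  These are the consequences of
   general position that the count needs; the transposed quadruple
   [(q, p, V, H)] satisfies them as well, so each lemma serves twice. *)
Definition admissible (H V : {set X}) : Prop := [/\
  forall x, x \in H -> (q x).+1 < n,
  forall x y z, x \in H -> y \in H -> z \in H ->
    p x = p y :> nat -> p y = p z :> nat -> q x < q y < q z -> False,
  forall x y w, x \in H -> y \in H -> w \in V ->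
    p x = p y :> nat -> q x < q y -> q x < q w <= q y &
  forall x y h w, x \in V -> y \in V -> h \in H -> w \in V ->
    q x = q y :> nat -> p x < p h <= p y ->
    (q x <= q h -> q w <= q h) /\ (q h < q x -> q h < q w)].

Variables H V : {set X}.
Hypothesis HV : admissible H V.

Lemma line_card_le2 i : #|line p H i| <= 2.
Proof.
have [_ no3 _ _] := HV; rewrite leqNgt; apply/negP.
have q_inj : {in line p H i &, injective (fun x => q x : nat)}.
  move=> x y; rewrite !inE => /andP[_ /eqP px] /andP[_ /eqP py] qxy.
  by apply: pq_inj; rewrite ?px ?py.
case/(card_gt2_sorted q_inj) => x [y [z [[]]]]; rewrite !inE.
move=> /andP[Hx /eqP px] /andP[Hy /eqP py] /andP[Hz /eqP pz] qxyz.
by apply: (no3 x y z) => //; rewrite ?px ?py ?pz.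
Qed.

Lemma full_line_pair i : #|line p H i| = 2 ->
  exists a b, [/\ line p H i = [set a; b], a \in H, b \in H, p a = p b :> nat & q a < q b].
Proof.
move/eqP/cards2P => [x [y [xy Lxy]]].
have : x \in line p H i /\ y \in line p H i by rewrite Lxy !inE !eqxx orbT.
rewrite !inE => -[/andP[Hx /eqP px] /andP[Hy /eqP py]].
have pxy : p x = p y :> nat by rewrite px py.
case: (ltngtP (q x) (q y)) => [lt|gt|eq]; first by exists x, y.
  by exists y, x; rewrite setUC.
by rewrite (pq_inj pxy eq) eqxx in xy.
Qed.

Lemma full_line_inside i : #|line p H i| = 2 -> {in V, forall w, q w \in interior n}.
Proof.
have [H0 _ H2 _] := HV; case/full_line_pair => a [b [_ Ha Hb pab qab]] w Vw.
by rewrite inE; have := H2 a b w Ha Hb Vw pab qab; have := H0 b Hb; lia.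
Qed.

Lemma avoid_line_card_le i0 : (forall x, x \in H -> p x != i0) -> #|H| <= m.-1 * 2.
Proof.
move=> avoid; have AI x : x \in H -> p x \in [set~ i0] by rewrite !inE => /avoid.
have [le _] := card_lines_le AI line_card_le2.
by rewrite cardsC1 card_ord in le.
Qed.

Lemma full_lines_spoke_starts : 2 < n -> (forall x, x \in H -> p x \in interior m) ->
  (forall i, i \in interior m -> #|line p H i| = 2) ->
  (forall j, j \in interior n -> #|line q V j| = 2) -> H = spoke_starts.
Proof.
have [H0 _ H2 _] := HV; move=> n_gt2 inside fullH /full_lines_meet meetV.
have [w1 Vw1 qw1] : exists2 w, w \in V & q w = 1 :> nat by apply: meetV; lia.
have [w2 Vw2 qw2] : exists2 w, w \in V & q w = n.-2 :> nat by apply: meetV; lia.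
have ends x : 0 < p x < m.-1 ->
    exists a b, [/\ line p H (p x) = [set a; b], q a = 0 :> nat & q b = n.-2 :> nat].
  move=> x_int; have /full_line_pair[a [b [Lab Ha Hb pab qab]]] : #|line p H (p x)| = 2.
    by rewrite fullH // inE.
  exists a, b; split=> //; first by have := H2 a b w1 Ha Hb Vw1 pab qab; lia.
  by have := H2 a b w2 Ha Hb Vw2 pab qab; have := H0 b Hb; lia.
apply/setP => x; rewrite !inE; apply/idP/andP => [Hx | [x_int qx]].
  have x_int : 0 < p x < m.-1 by have := inside x Hx; rewrite inE.
  split=> //.
  have [a [b [Lab qa qb]]] := ends x x_int.
  have : x \in line p H (p x) by rewrite inE Hx eqxx.
  by rewrite Lab => /set2P[->|->]; rewrite ?qa ?qb eqxx ?orbT.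
have [a [b [Lab qa qb]]] := ends x x_int.
have : a \in line p H (p x) /\ b \in line p H (p x) by rewrite Lab !inE !eqxx orbT.
rewrite !inE => -[/andP[Ha /eqP pa] /andP[Hb /eqP pb]].
case/orP: qx => /eqP qx; [have -> : x = a | have -> : x = b] => //.
all: by apply: pq_inj; rewrite ?pa ?pb ?qx ?qa ?qb.
Qed.

End Admissible.

Section ThinLines.
Variables (X : finType) (m n : nat) (p : X -> 'I_m) (q : X -> 'I_n).
Hypothesis pq_inj : forall x y, p x = p y :> nat -> q x = q y :> nat -> x = y.
Variables H V : {set X}.
Hypotheses (HV : admissible p q H V) (VH : admissible q p V H).
Hypotheses (m_ge5 : 5 <= m) (n_ge5 : 5 <= n).

(* A full line of [H] keeps [V] off the two border lines across; a point of
   [V] between the pair then empties a border line of [H] (fourth condition of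
   [VH]). *)
Lemma card_lt_thin_lines : (forall j, #|line q V j| <= 1) ->
  #|H| + #|V| < 2 * m + 2 * n - 8.
Proof.
move=> V_le1; have H_le2 := line_card_le2 pq_inj HV.
have [/existsP[i /eqP fullH]|/existsPn H_lt2] := boolP [exists i, #|line p H i| == 2].
  have [leV _] := card_lines_le (full_line_inside pq_inj HV fullH) V_le1.
  rewrite card_interior in leV.
  have [V0|[w Vw]] := set_0Vmem V.
    have [leH _] := card_lines_le (fun x _ => in_setT (p x)) H_le2.
    by rewrite V0 cards0 cardsT card_ord in leH *; lia.
  have [a [b [_ Ha Hb pab qab]]] := full_line_pair pq_inj fullH.
  have [_ _ H2 _] := HV; have [V_bound _ _ V3] := VH.
  have qw := H2 a b w Ha Hb Vw pab qab; have pw := V_bound w Vw.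
  have [i0 avoid] : exists i0 : 'I_m, forall h, h \in H -> p h != i0.
    have [le_aw|lt_wa] := leqP (p a) (p w).
      have m_last : m.-1 < m by lia.
      exists (Ordinal m_last) => h Hh; rewrite -val_eqE /=.
      by have := (V3 a b w h Ha Hb Vw Hh pab qw).1 le_aw; lia.
    have m_pos : 0 < m by lia.
    exists (Ordinal m_pos) => h Hh; rewrite -val_eqE /=.
    by have := (V3 a b w h Ha Hb Vw Hh pab qw).2 lt_wa; lia.
  by have := avoid_line_card_le pq_inj HV avoid; lia.
have H_le1 i : #|line p H i| <= 1 by have := H_le2 i; have := H_lt2 i; lia.
have [leH _] := card_lines_le (fun x _ => in_setT (p x)) H_le1.
have [leV _] := card_lines_le (fun x _ => in_setT (q x)) V_le1.
by rewrite !cardsT !card_ord in leH leV; lia.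
Qed.

End ThinLines.

Lemma card_admissible_le (X : finType) m n (p : X -> 'I_m) (q : X -> 'I_n) (H V : {set X}) :
  (forall x y, p x = p y :> nat -> q x = q y :> nat -> x = y) ->
  admissible p q H V -> admissible q p V H -> 5 <= m -> 5 <= n ->
  #|H| + #|V| <= 2 * m + 2 * n - 8 /\
  (#|H| + #|V| = 2 * m + 2 * n - 8 -> H = spoke_starts p q /\ V = spoke_starts q p).
Proof.
move=> pq_inj HV VH m_ge5 n_ge5.
have qp_inj x y : q x = q y :> nat -> p x = p y :> nat -> x = y by move=> /[swap]; apply: pq_inj.
have [/existsP[i /eqP fullH]|/existsPn H_lt2] := boolP [exists i, #|line p H i| == 2]; last first.
  have H_le1 i : #|line p H i| <= 1 by have := line_card_le2 pq_inj HV i; have := H_lt2 i; lia.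
  by have := card_lt_thin_lines qp_inj VH HV n_ge5 m_ge5 H_le1; lia.
have [/existsP[j /eqP fullV]|/existsPn V_lt2] := boolP [exists j, #|line q V j| == 2]; last first.
  have V_le1 j : #|line q V j| <= 1 by have := line_card_le2 qp_inj VH j; have := V_lt2 j; lia.
  by have := card_lt_thin_lines pq_inj HV VH m_ge5 n_ge5 V_le1; lia.
have Hint := full_line_inside qp_inj VH fullV.
have Vint := full_line_inside pq_inj HV fullH.
have [leH eqH] := card_lines_le Hint (line_card_le2 pq_inj HV).
have [leV eqV] := card_lines_le Vint (line_card_le2 qp_inj VH).
rewrite card_interior in leH eqH; rewrite card_interior in leV eqV.
split=> [|sum_eq]; first lia.
have fullHs k (k_int : k \in interior m) : #|line p H k| = 2.
  by apply/eqP; move: k k_int; apply/forall_inP; rewrite -eqH; apply/eqP; lia.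
have fullVs k (k_int : k \in interior n) : #|line q V k| = 2.
  by apply/eqP; move: k k_int; apply/forall_inP; rewrite -eqV; apply/eqP; lia.
split; first by apply: (full_lines_spoke_starts pq_inj HV _ Hint fullHs fullVs); lia.
by apply: (full_lines_spoke_starts qp_inj VH _ Vint fullVs fullHs); lia.
Qed.

(** * Edge sets of the grid in general position *)

Section GridEdges.
Variables r s : nat.
Local Notation T := ('I_r * 'I_s)%type.
Local Notation e := (grid_rel r s).

(* [step1 x] and [step2 x] are only meaningful when the next coordinate is in
   range; otherwise [insubd] returns [x] itself. *)
Definition step1 (x : T) : T := (insubd x.1 x.1.+1, x.2).
Definition step2 (x : T) : T := (x.1, insubd x.2 x.2.+1).

Definition ver_edge (x : T) : {set T} := [set x; step1 x].
Definition hor_edge (x : T) : {set T} := [set x; step2 x].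

Definition vstarts (S : {set {set T}}) : {set T} :=
  [set x : T | (x.1.+1 < r) && (ver_edge x \in S)].
Definition hstarts (S : {set {set T}}) : {set T} :=
  [set x : T | (x.2.+1 < s) && (hor_edge x \in S)].

Lemma step1E (x : T) : x.1.+1 < r -> (step1 x).1 = x.1.+1 :> nat /\ (step1 x).2 = x.2 :> nat.
Proof. by move=> lt; rewrite /step1 /= val_insubd lt. Qed.

Lemma step2E (x : T) : x.2.+1 < s -> (step2 x).1 = x.1 :> nat /\ (step2 x).2 = x.2.+1 :> nat.
Proof. by move=> lt; rewrite /step2 /= val_insubd lt. Qed.

Lemma ver_edge_rel (x : T) : x.1.+1 < r -> e x (step1 x) && e (step1 x) x.
Proof. by move/step1E => [c1 c2]; rewrite !grid_relE /grid_dist c1 c2 /distn; lia. Qed.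

Lemma hor_edge_rel (x : T) : x.2.+1 < s -> e x (step2 x) && e (step2 x) x.
Proof. by move/step2E => [c1 c2]; rewrite !grid_relE /grid_dist c1 c2 /distn; lia. Qed.

Lemma vstartsP S (x : T) : x \in vstarts S -> exists y, [/\ x.1.+1 < r,
  edge_in S x y, edge_in S y x, y.1 = x.1.+1 :> nat & y.2 = x.2 :> nat].
Proof.
rewrite inE /ver_edge => /andP[lt Sx]; have /andP[e1 e2] := ver_edge_rel lt.
by exists (step1 x); have [c1 c2] := step1E lt; rewrite /edge_in e1 e2 Sx setUC Sx.
Qed.

Lemma hstartsP S (x : T) : x \in hstarts S -> exists y, [/\ x.2.+1 < s,
  edge_in S x y, edge_in S y x, y.1 = x.1 :> nat & y.2 = x.2.+1 :> nat].
Proof.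
rewrite inE /hor_edge => /andP[lt Sx]; have /andP[e1 e2] := hor_edge_rel lt.
by exists (step2 x); have [c1 c2] := step2E lt; rewrite /edge_in e1 e2 Sx setUC Sx.
Qed.

Lemma grid_edge_starts (a b : T) : e a b -> exists x : T,
  (x.2.+1 < s /\ [set a; b] = hor_edge x) \/ (x.1.+1 < r /\ [set a; b] = ver_edge x).
Proof.
have ver (x y : T) : x.1.+1 = y.1 :> nat -> x.2 = y.2 :> nat ->
    x.1.+1 < r /\ [set x; y] = ver_edge x.
  move=> c1 c2; have lt : x.1.+1 < r by rewrite c1.
  have [d1 d2] := step1E lt; split=> //.
  by have -> : y = step1 x by apply: grid_vertex_eq; lia.
have hor (x y : T) : x.1 = y.1 :> nat -> x.2.+1 = y.2 :> nat ->
    x.2.+1 < s /\ [set x; y] = hor_edge x.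
  move=> c1 c2; have lt : x.2.+1 < s by rewrite c2.
  have [d1 d2] := step2E lt; split=> //.
  by have -> : y = step2 x by apply: grid_vertex_eq; lia.
rewrite /grid_rel /cart_prod_rel /path_graph_rel -!val_eqE /=.
case/orP => [/andP[/orP[/eqP c1|/eqP c1] /eqP c2] | /andP[/eqP c1 /orP[/eqP c2|/eqP c2]]].
- by exists a; right; apply: ver.
- by exists b; right; rewrite setUC; apply: ver.
- by exists a; left; apply: hor.
- by exists b; left; rewrite setUC; apply: hor.
Qed.

Lemma edges_sub_starts (S : {set {set T}}) : S \subset edge_set e ->
  S \subset hor_edge @: hstarts S :|: ver_edge @: vstarts S.
Proof.
move/subsetP=> sub; apply/subsetP => A SA.
have := sub A SA; rewrite inE => /existsP[a /existsP[b /andP[eab /eqP Aab]]].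
have [x [[lt E]|[lt E]]] := grid_edge_starts eab; rewrite Aab E in SA *; rewrite inE.
  by rewrite imset_f // inE lt SA.
by rewrite orbC imset_f // inE lt SA.
Qed.

Lemma card_le_starts (S : {set {set T}}) : S \subset edge_set e ->
  #|S| <= #|hstarts S| + #|vstarts S|.
Proof.
move/edges_sub_starts/subset_leq_card/leq_trans; apply.
apply: leq_trans (leq_card_setU _ _).1 _.
by apply: leq_add; apply: leq_imset_card.
Qed.

Local Ltac monotone_by_lia := rewrite /grid_le /le_dir /=; lia.

Variable S : {set {set T}}.
Hypothesis gpS : edge_gp_set e S.

Lemma gp_admissible_hor : admissible (@fst 'I_r 'I_s) (@snd 'I_r 'I_s) (hstarts S) (vstarts S).
Proof.
split=> /=.
- by move=> x /hstartsP[? []].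
- move=> x y z /hstartsP[x' [_ Ex _ ? ?]] /hstartsP[y' [_ Ey _ ? ?]].
  move=> /hstartsP[z' [_ Ez _ ? ?]] ? ? ?.
  by apply: (gp_no_monotone_chain (dir := (true, true)) gpS Ex Ey Ez); monotone_by_lia.
- move=> x y w /hstartsP[x' [_ Ex _ ? ?]] /hstartsP[y' [_ Ey _ ? ?]].
  move=> /vstartsP[w' [_ Ew Ew' ? ?]] ? ?.
  apply/andP; split; [rewrite ltnNge | rewrite leqNgt]; apply/negP => ?.
    have [?|?] := leqP w.1.+1 x.1.
      by apply: (gp_no_monotone_chain (dir := (true, true)) gpS Ew Ex Ey); monotone_by_lia.
    by apply: (gp_no_monotone_chain (dir := (false, true)) gpS Ew' Ex Ey); monotone_by_lia.
  have [?|?] := leqP y.1 w.1.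
    by apply: (gp_no_monotone_chain (dir := (true, true)) gpS Ex Ey Ew); monotone_by_lia.
  by apply: (gp_no_monotone_chain (dir := (false, true)) gpS Ex Ey Ew'); monotone_by_lia.
move=> x y h w /vstartsP[x' [_ Ex _ ? ?]] /vstartsP[y' [_ _ Ey' ? ?]].
move=> /hstartsP[h' [_ Eh Eh' ? ?]] /vstartsP[w' [_ Ew Ew' ? ?]] ? ?.
split=> ?; [rewrite leqNgt | rewrite ltnNge]; apply/negP => ?; have [?|?] := leqP h.1 w.1.
- by apply: (gp_no_monotone_chain (dir := (true, true)) gpS Ex Eh Ew); monotone_by_lia.
- by apply: (gp_no_monotone_chain (dir := (false, true)) gpS Ey' Eh Ew'); monotone_by_lia.
- by apply: (gp_no_monotone_chain (dir := (true, false)) gpS Ex Eh' Ew); monotone_by_lia.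
- by apply: (gp_no_monotone_chain (dir := (false, false)) gpS Ey' Eh' Ew'); monotone_by_lia.
Qed.

Lemma gp_admissible_ver : admissible (@snd 'I_r 'I_s) (@fst 'I_r 'I_s) (vstarts S) (hstarts S).
Proof.
split=> /=.
- by move=> x /vstartsP[? []].
- move=> x y z /vstartsP[x' [_ Ex _ ? ?]] /vstartsP[y' [_ Ey _ ? ?]].
  move=> /vstartsP[z' [_ Ez _ ? ?]] ? ? ?.
  by apply: (gp_no_monotone_chain (dir := (true, true)) gpS Ex Ey Ez); monotone_by_lia.
- move=> x y w /vstartsP[x' [_ Ex _ ? ?]] /vstartsP[y' [_ Ey _ ? ?]].
  move=> /hstartsP[w' [_ Ew Ew' ? ?]] ? ?.
  apply/andP; split; [rewrite ltnNge | rewrite leqNgt]; apply/negP => ?.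
    have [?|?] := leqP w.2.+1 x.2.
      by apply: (gp_no_monotone_chain (dir := (true, true)) gpS Ew Ex Ey); monotone_by_lia.
    by apply: (gp_no_monotone_chain (dir := (true, false)) gpS Ew' Ex Ey); monotone_by_lia.
  have [?|?] := leqP y.2 w.2.
    by apply: (gp_no_monotone_chain (dir := (true, true)) gpS Ex Ey Ew); monotone_by_lia.
  by apply: (gp_no_monotone_chain (dir := (true, false)) gpS Ex Ey Ew'); monotone_by_lia.
move=> x y h w /hstartsP[x' [_ Ex _ ? ?]] /hstartsP[y' [_ _ Ey' ? ?]].
move=> /vstartsP[h' [_ Eh Eh' ? ?]] /hstartsP[w' [_ Ew Ew' ? ?]] ? ?.
split=> ?; [rewrite leqNgt | rewrite ltnNge]; apply/negP => ?; have [?|?] := leqP h.2 w.2.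
- by apply: (gp_no_monotone_chain (dir := (true, true)) gpS Ex Eh Ew); monotone_by_lia.
- by apply: (gp_no_monotone_chain (dir := (true, false)) gpS Ey' Eh Ew'); monotone_by_lia.
- by apply: (gp_no_monotone_chain (dir := (false, true)) gpS Ex Eh' Ew); monotone_by_lia.
- by apply: (gp_no_monotone_chain (dir := (false, false)) gpS Ey' Eh' Ew'); monotone_by_lia.
Qed.

End GridEdges.

Lemma gp_starts_count r s (S : {set {set 'I_r * 'I_s}}) : 5 <= r -> 5 <= s ->
  edge_gp_set (grid_rel r s) S ->
  #|hstarts S| + #|vstarts S| <= 2 * r + 2 * s - 8 /\
  (#|hstarts S| + #|vstarts S| = 2 * r + 2 * s - 8 ->
   hstarts S = spoke_starts (@fst 'I_r 'I_s) (@snd 'I_r 'I_s) /\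
   vstarts S = spoke_starts (@snd 'I_r 'I_s) (@fst 'I_r 'I_s)).
Proof.
move=> r5 s5 gpS.
exact: card_admissible_le (@grid_vertex_eq r s) (gp_admissible_hor gpS) (gp_admissible_ver gpS) r5 s5.
Qed.

(** * The spokes *)

Definition extreme n (k : nat) : bool := (k == 0) || (k == n.-1).

Lemma extreme_squeeze up n (x y z u v : nat) : x < n -> y < n -> u < n -> v < n ->
  extreme n z -> le_dir up x y -> le_dir up y z -> le_dir up z u -> le_dir up u v ->
  (x == z) && (y == z) || (u == z) && (v == z).
Proof. by case: up; rewrite /extreme /le_dir; lia. Qed.

Section Spokes.
Variables r s : nat.
Hypotheses (r_gt2 : 2 < r) (s_gt2 : 2 < s).
Local Notation T := ('I_r * 'I_s)%type.
Local Notation e := (grid_rel r s).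

Definition spokes : {set {set T}} :=
  @hor_edge r s @: spoke_starts (@fst 'I_r 'I_s) (@snd 'I_r 'I_s)
  :|: @ver_edge r s @: spoke_starts (@snd 'I_r 'I_s) (@fst 'I_r 'I_s).

Definition on_border (x : T) : bool := extreme r x.1 || extreme s x.2.

Definition spoke (a b : T) : bool := on_border a != on_border b.

Lemma spoke_starts_hor (x : T) : x \in spoke_starts (@fst 'I_r 'I_s) (@snd 'I_r 'I_s) ->
  x.2.+1 < s.
Proof. by rewrite !inE; have := ltn_ord x.2; lia. Qed.

Lemma spoke_starts_ver (x : T) : x \in spoke_starts (@snd 'I_r 'I_s) (@fst 'I_r 'I_s) ->
  x.1.+1 < r.
Proof. by rewrite !inE; have := ltn_ord x.1; lia. Qed.

Lemma spokes_spoke (a b : T) : [set a; b] \in spokes -> spoke a b.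
Proof.
have := ltn_ord a.1; have := ltn_ord a.2; have := ltn_ord b.1; have := ltn_ord b.2.
rewrite inE /spoke /on_border /extreme => ? ? ? ? /orP[] /imsetP[x xS /set2_eq Eab].
  have [c1 c2] := step2E (spoke_starts_hor xS); move: xS; rewrite !inE.
  by case: Eab => -[-> ->]; lia.
have [c1 c2] := step1E (spoke_starts_ver xS); move: xS; rewrite !inE.
by case: Eab => -[-> ->]; lia.
Qed.

Lemma border_squeeze dir (a b c d f : T) : on_border c ->
  grid_le dir a b -> grid_le dir b c -> grid_le dir c d -> grid_le dir d f ->
  on_border a && on_border b || on_border d && on_border f.
Proof.
rewrite /on_border /grid_le => /orP[] ext /andP[ab1 ab2] /andP[bc1 bc2].
  move=> /andP[cd1 _] /andP[df1 _].
  have := extreme_squeeze (ltn_ord a.1) (ltn_ord b.1) (ltn_ord d.1) (ltn_ord f.1) ext ab1 bc1 cd1 df1.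
  by case/orP => /andP[/eqP-> /eqP->]; rewrite ext ?orbT.
move=> /andP[_ cd2] /andP[_ df2].
have := extreme_squeeze (ltn_ord a.2) (ltn_ord b.2) (ltn_ord d.2) (ltn_ord f.2) ext ab2 bc2 cd2 df2.
by case/orP => /andP[/eqP-> /eqP->]; rewrite ext ?orbT.
Qed.

Lemma no_monotone_spokes dir (a1 b1 a2 b2 a3 b3 : T) :
  spoke a1 b1 -> spoke a2 b2 -> spoke a3 b3 ->
  path (grid_le dir) a1 [:: b1; a2; b2; a3; b3] -> False.
Proof.
move=> s1 s2 s3 /and5P[m1 m2 m3 m4 /andP[m5 _]].
have [c [b1c ca3 border_c]] : exists c, [/\ grid_le dir b1 c, grid_le dir c a3 & on_border c].
  have [ba2|/negbTE nba2] := boolP (on_border a2).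
    by exists a2; rewrite m2 (grid_le_trans m3 m4).
  exists b2; rewrite (grid_le_trans m2 m3) m4.
  by move: s2; rewrite /spoke nba2; case: (on_border b2).
case/orP: (border_squeeze border_c m1 b1c ca3 m5) => /andP[x y].
  by move: s1; rewrite /spoke x y.
by move: s3; rewrite /spoke x y.
Qed.

Lemma spokes_gp : edge_gp_set e spokes.
Proof.
split.
  apply/subsetP => A; rewrite inE => /orP[] /imsetP[x xS ->]; rewrite inE.
    have /andP[ex _] := hor_edge_rel (spoke_starts_hor xS).
    by apply/existsP; exists x; apply/existsP; exists (step2 x); rewrite ex eqxx.
  have /andP[ex _] := ver_edge_rel (spoke_starts_ver xS).
  by apply/existsP; exists x; apply/existsP; exists (step1 x); rewrite ex eqxx.
move=> x p geo; have [dir mp] := geodesic_monotone geo.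
have mono i j : i <= j <= size p -> grid_le dir (nth x (x :: p) i) (nth x (x :: p) j).
  case/andP=> ij jp.
  apply: (sorted_leq_nth (@grid_le_trans _ _ dir) (@grid_le_refl _ _ dir) x (s := x :: p) mp);
    by rewrite ?inE /= ?ltnS // (leq_trans ij jp).
set E := walk_edges x p.
have at_index A : A \in E ->
    index A E < size p /\ A = [set nth x (x :: p) (index A E); nth x (x :: p) (index A E).+1].
  move=> AE; have lt : index A E < size p.
    by rewrite -(size_pairmap (fun a b : 'I_r * 'I_s => [set a; b]) x p) index_mem.
  by split=> //; rewrite -[LHS](nth_index set0 AE) (nth_pairmap x).
have idx_inj : {in [set A in spokes | A \in E] &, injective (index^~ E)}.
  by move=> A B; rewrite !inE => /andP[_ AE] /andP[_ BE]; apply: index_inj.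
rewrite ltnNge; apply/negP => /(card_gt2_sorted idx_inj)[A1 [A2 [A3 [[]]]]].
move=> /setIdP[S1 /at_index[lt1 E1]] /setIdP[S2 /at_index[lt2 E2]].
move=> /setIdP[S3 /at_index[lt3 E3]].
move: (index A1 E) (index A2 E) (index A3 E) lt1 lt2 lt3 E1 E2 E3 => t1 t2 t3 ? ? ? E1 E2 E3 ?.
rewrite {}E1 in S1; rewrite {}E2 in S2; rewrite {}E3 in S3.
apply: (no_monotone_spokes (dir := dir) (spokes_spoke S1) (spokes_spoke S2) (spokes_spoke S3)).
by apply/and5P; split; rewrite ?andbT; apply: mono; lia.
Qed.

Lemma card_spokes : #|spokes| = 2 * r + 2 * s - 8.
Proof.
have hor_inj : {in spoke_starts (@fst 'I_r 'I_s) (@snd 'I_r 'I_s) &, injective (@hor_edge r s)}.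
  move=> x y /spoke_starts_hor/step2E[_ x2] /spoke_starts_hor/step2E[_ y2].
  case/set2_eq=> [[]//|[xy yx]].
  by rewrite -xy in y2; rewrite yx in x2; lia.
have ver_inj : {in spoke_starts (@snd 'I_r 'I_s) (@fst 'I_r 'I_s) &, injective (@ver_edge r s)}.
  move=> x y /spoke_starts_ver/step1E[x1 _] /spoke_starts_ver/step1E[y1 _].
  case/set2_eq=> [[]//|[xy yx]].
  by rewrite -xy in y1; rewrite yx in x1; lia.
have disj : @hor_edge r s @: spoke_starts (@fst 'I_r 'I_s) (@snd 'I_r 'I_s)
             :&: @ver_edge r s @: spoke_starts (@snd 'I_r 'I_s) (@fst 'I_r 'I_s) = set0.
  apply/setP => A; rewrite in_setI in_set0; apply/negP => /andP[].
  case/imsetP=> x /spoke_starts_hor/step2E[x1 _] ->.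
  case/imsetP=> y /spoke_starts_ver/step1E[y1 _] /set2_eq[[xy sxy]|[xy sxy]].
    by rewrite sxy y1 xy in x1; lia.
  by rewrite sxy in x1; rewrite xy y1 in x1; lia.
have rows : spoke_starts (@fst 'I_r 'I_s) (@snd 'I_r 'I_s) = setX (interior r) (end_starts s).
  by apply/setP => -[i j]; rewrite !inE.
have cols : spoke_starts (@snd 'I_r 'I_s) (@fst 'I_r 'I_s) = setX (end_starts r) (interior s).
  by apply/setP => -[i j]; rewrite !inE andbC.
rewrite cardsU disj cards0 subn0 !card_in_imset // rows cols !cardsX.
by rewrite !card_interior !card_end_starts //; lia.
Qed.

End Spokes.

Theorem theorem4p2 (r s : nat) : 5 <= r -> 5 <= s ->
  exists S : {set {set 'I_r * 'I_s}},
    gpe_set (grid_rel r s) S /\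
    forall S' : {set {set 'I_r * 'I_s}}, gpe_set (grid_rel r s) S' -> S' = S.
Proof.
move=> r5 s5; have [r_gt2 s_gt2] : 2 < r /\ 2 < s by lia.
have ub S : edge_gp_set (grid_rel r s) S -> #|S| <= 2 * r + 2 * s - 8.
  by move=> gpS; apply: leq_trans (card_le_starts gpS.1) (gp_starts_count r5 s5 gpS).1.
exists (spokes r s); split.
  split=> [|S /ub]; first exact: spokes_gp.
  by rewrite card_spokes.
move=> S [gpS maxS]; have := maxS _ (spokes_gp r_gt2 s_gt2); rewrite card_spokes // => ge.
have [le eq_spokes] := gp_starts_count r5 s5 gpS.
have /eq_spokes[eqH eqV] : #|hstarts S| + #|vstarts S| = 2 * r + 2 * s - 8.
  by apply/eqP; rewrite eqn_leq le; apply: leq_trans ge (card_le_starts gpS.1).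
apply/eqP; rewrite eqEcard card_spokes // ge andbT.
by have := edges_sub_starts gpS.1; rewrite eqH eqV.
Qed.
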